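(* Let $v>0$, $N\ge1$, and consider the coagulation process $CP(N)$ with single-coagulation rates $\psi(i,j)=(i+j)v$, started from the state $(N,0,\dots,0)$ (total dissipation). Then for all $t\ge0$, $1\le r\le N$ and $\eta=(n_1,\dots,n_N)\in\Omega_{r,N}$, $$\mathbb P(X_N^{(\rho)}(t)=\eta)=N!\,e^{-N(r-1)vt}\big(1-e^{-Nvt}\big)^{N-r}N^{-(N-r)}\prod_{k=1}^N\frac{k^{(k-1)n_k}}{(k!)^{n_k}n_k!}.$$ Equivalently, the distribution is Gibbsian with $C_N=N!$ and weights $a_{k,N}(t)=e^{-(N-k)vt}(1-e^{-Nvt})^{k-1}N^{-(k-1)}\frac{k^{k-1}}{k!}$.
   Context: $\Omega_N=\{\eta=(n_1,\dots,n_N):\sum_k kn_k=N\}$ and $\Omega_{r,N}=\{\eta\in\Omega_N:n_1+\dots+n_N=r\}$. $CP(N)$ is the continuous-time Markov chain on $\Omega_N$ in which any cluster of size $i$ and any other cluster of size $j$ merge into a cluster of size $i+j$ at rate $\psi(i,j)$; thus the transition $\eta\to\eta^{(i,j)}$ has rate $n_in_j\psi(i,j)$ for $i\ne j$ and $\frac{n_i(n_i-1)}2\psi(i,i)$ for $i=j$. $X_N^{(\rho)}(t)$ denotes the process at time $t$, $\rho$ the initial distribution (here the point mass at $(N,0,\dots,0)$). *)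

From Stdlib Require Import Reals Lra Lia Arith List.
Import ListNotations.
Open Scope R_scope.

(* A configuration eta = (n_1, ..., n_N) is encoded as a function nat -> nat,
   eta k = n_k = number of clusters of size k. *)
Definition state := nat -> nat.

Definition natsum (l : list nat) : nat := fold_right Nat.add 0%nat l.
Definition Rprod (l : list R) : R := fold_right Rmult 1 l.
Definition Rsum (l : list R) : R := fold_right Rplus 0 l.

Definition in_Omega (N : nat) (eta : state) : Prop :=
  eta 0%nat = 0%nat /\ (forall k, (N < k)%nat -> eta k = 0%nat) /\
  natsum (map (fun k => (k * eta k)%nat) (seq 1 N)) = N.

Definition in_Omega_r (N r : nat) (eta : state) : Prop :=
  in_Omega N eta /\ natsum (map eta (seq 1 N)) = r.

Definition ind (b : bool) : nat := if b then 1%nat else 0%nat.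

Definition coag (i j : nat) (eta : state) : state :=
  fun m => (eta m - ind (m =? i) - ind (m =? j) + ind (m =? i + j))%nat.

(* The (unique) predecessor eta' with coag i j eta' = eta (valid when eta_(i+j) >= 1). *)
Definition split (i j : nat) (eta : state) : state :=
  fun m => (eta m - ind (m =? i + j) + ind (m =? i) + ind (m =? j))%nat.

Definition psi (v : R) (i j : nat) : R := INR (i + j) * v.

Definition rate (v : R) (eta : state) (i j : nat) : R :=
  psi v i j * (if i =? j then INR (eta i) * INR (eta i - 1) / 2
               else INR (eta i) * INR (eta j)).

Definition pairs (N : nat) : list (nat * nat) :=
  flat_map (fun i => map (fun j => (i, j)) (seq i (N + 1 - i))) (seq 1 N).

Definition outflow (v : R) (N : nat) (eta : state) : R :=
  Rsum (map (fun ij => rate v eta (fst ij) (snd ij)) (pairs N)).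

Definition inflow (v : R) (N : nat) (q : state -> R) (eta : state) : R :=
  Rsum (map (fun ij =>
     if (1 <=? eta (fst ij + snd ij))%nat
     then q (split (fst ij) (snd ij) eta) *
          rate v (split (fst ij) (snd ij) eta) (fst ij) (snd ij)
     else 0) (pairs N)).

Definition init (N : nat) : state := fun m => if m =? 1 then N else 0%nat.

(* p is the law t |-> P(X_N(t) = .) of CP(N) started at init N:
   it solves the Kolmogorov forward equations on Omega_N for t > 0,
   is right-continuous at 0, and has initial value the point mass at init N. *)
Definition is_CP_law (v : R) (N : nat) (p : R -> state -> R) : Prop :=
  (forall eta, in_Omega N eta -> forall t, 0 < t ->
     derivable_pt_lim (fun s => p s eta) t
       (inflow v N (p t) eta - p t eta * outflow v N eta)) /\
  (forall eta, in_Omega N eta -> forall eps, 0 < eps -> exists delta, 0 < delta /\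
     forall s, 0 < s < delta -> Rabs (p s eta - p 0 eta) < eps) /\
  p 0 (init N) = 1 /\
  (forall eta, in_Omega N eta -> (exists k, eta k <> init N k) -> p 0 eta = 0).

Definition gibbs_formula (v : R) (N r : nat) (eta : state) (t : R) : R :=
  INR (fact N) * exp (- INR N * INR (r - 1) * v * t) *
  (1 - exp (- INR N * v * t)) ^ (N - r) / INR N ^ (N - r) *
  Rprod (map (fun k => INR k ^ ((k - 1) * eta k) /
                       (INR (fact k) ^ (eta k) * INR (fact (eta k)))) (seq 1 N)).

(* The Gibbs formula factors as [gibbs_time v N r t] times [prod_k c_k^(n_k) / n_k!] with
   [c_k = k^(k-1) / k!]. For such a product the outflow rate of a state with r clusters is
   [v N (r - 1)], and if the states with r + 1 clusters carry [G] times the product, the inflow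
   is [G v (N - r)] times the product at the target, by the convolution identity [m sum_i c_i c_(m-i) = 2 (m - 1) c_m]
   (a consequence of Abel's identity). So the formula solves the forward equations level by
   level, going down from r = N; at each level the difference with the law of the process then
   solves a scalar linear ODE with zero initial value, hence vanishes. *)

From Pilot Require Import Defs.
From Stdlib Require Import Reals Lra Lia Arith List FunctionalExtensionality.
From Coquelicot Require Import Coquelicot.
Import Defs. (* [split] is also a name in Stdlib *)
Open Scope R_scope.

(** * Finite sums over ranges of naturals *)

(* [rsum f a n] is f a + ... + f (a + n - 1). *)
Definition rsum (f : nat -> R) (a n : nat) : R := Rsum (map f (seq a n)).

Lemma Rsum_app (l1 l2 : list R) : Rsum (l1 ++ l2) = Rsum l1 + Rsum l2.
Proof. induction l1 as [|x l1 IH]; simpl; [ring | rewrite IH; ring]. Qed.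

Lemma rsum_ext (f g : nat -> R) a n :
  (forall k, (a <= k < a + n)%nat -> f k = g k) -> rsum f a n = rsum g a n.
Proof.
  intros H. unfold rsum. f_equal. apply map_ext_in.
  intros k Hk. apply in_seq in Hk. auto.
Qed.

Lemma rsum_S (f : nat -> R) a n : rsum f a (S n) = rsum f a n + f (a + n)%nat.
Proof. unfold rsum. rewrite seq_S, map_app, Rsum_app. simpl. ring. Qed.

Lemma rsum_cons (f : nat -> R) a n : rsum f a (S n) = f a + rsum f (S a) n.
Proof. reflexivity. Qed.

Lemma rsum_shift (f : nat -> R) a n : rsum f (S a) n = rsum (fun k => f (S k)) a n.
Proof. unfold rsum. rewrite <- seq_shift, map_map. reflexivity. Qed.

Lemma rsum_add (f g : nat -> R) a n : rsum (fun k => f k + g k) a n = rsum f a n + rsum g a n.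
Proof. unfold rsum. induction (seq a n); simpl; [ring | rewrite IHl; ring]. Qed.

Lemma rsum_sub (f g : nat -> R) a n : rsum (fun k => f k - g k) a n = rsum f a n - rsum g a n.
Proof. unfold rsum. induction (seq a n); simpl; [ring | rewrite IHl; ring]. Qed.

Lemma rsum_scal (c : R) (f : nat -> R) a n : rsum (fun k => c * f k) a n = c * rsum f a n.
Proof. unfold rsum. induction (seq a n); simpl; [ring | rewrite IHl; ring]. Qed.

Lemma rsum_eq0 (f : nat -> R) a n : (forall k, (a <= k < a + n)%nat -> f k = 0) -> rsum f a n = 0.
Proof.
  intros H. rewrite (rsum_ext f (fun _ => 0)) by exact H.
  unfold rsum. induction (seq a n); simpl; [ring | rewrite IHl; ring].
Qed.

Lemma rsum_le (f g : nat -> R) a n :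
  (forall k, (a <= k < a + n)%nat -> f k <= g k) -> rsum f a n <= rsum g a n.
Proof.
  revert a. induction n as [|n IH]; intros a H; unfold rsum; simpl; [lra|].
  fold (rsum f (S a) n) (rsum g (S a) n).
  assert (f a <= g a) by (apply H; lia).
  assert (rsum f (S a) n <= rsum g (S a) n) by (apply IH; intros; apply H; lia). lra.
Qed.

Lemma rsum_nonneg_eq0 (f : nat -> R) a n :
  (forall k, (a <= k < a + n)%nat -> 0 <= f k) -> rsum f a n = 0 ->
  forall k, (a <= k < a + n)%nat -> f k = 0.
Proof.
  revert a. induction n as [|n IH]; intros a Hpos Hsum k Hk; [lia|].
  unfold rsum in Hsum; simpl in Hsum; fold (rsum f (S a) n) in Hsum.
  assert (Ha : 0 <= f a) by (apply Hpos; lia).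
  assert (Hr : 0 <= rsum f (S a) n)
    by (rewrite <- (rsum_eq0 (fun _ => 0) (S a) n) by auto; apply rsum_le; intros; apply Hpos; lia).
  destruct (Nat.eq_dec k a) as [->|Hne]; [lra|].
  apply (IH (S a)); [intros; apply Hpos; lia | lra | lia].
Qed.

Lemma rsum_kronecker (f : nat -> R) a n b : (a <= b < a + n)%nat ->
  rsum (fun k => if k =? b then f k else 0) a n = f b.
Proof.
  revert a. induction n as [|n IH]; intros a Hb; [lia|].
  unfold rsum; simpl; fold (rsum (fun k => if k =? b then f k else 0) (S a) n).
  destruct (Nat.eqb_spec a b) as [->|Hne].
  - rewrite rsum_eq0; [ring|]. intros k Hk. destruct (Nat.eqb_spec k b); [lia | reflexivity].
  - rewrite IH by lia. ring.
Qed.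

Lemma Rprod_mul {A} (f g : A -> R) (l : list A) :
  Rprod (map (fun x => f x * g x) l) = Rprod (map f l) * Rprod (map g l).
Proof. induction l as [|x l IH]; simpl; [ring | rewrite IH; ring]. Qed.

Lemma Rprod_seq_kronecker (c : R) a n b : (a <= b < a + n)%nat ->
  Rprod (map (fun k => if k =? b then c else 1) (seq a n)) = c.
Proof.
  revert a. induction n as [|n IH]; intros a Hb; [lia|]. simpl.
  destruct (Nat.eqb_spec a b) as [->|Hne].
  - assert (Hone : forall l, ~ In b l -> Rprod (map (fun k => if k =? b then c else 1) l) = 1).
    { induction l as [|k l IHl]; intros Hl; simpl; [reflexivity|].
      destruct (Nat.eqb_spec k b) as [->|]; [exfalso; apply Hl; left; reflexivity|].
      rewrite IHl; [ring | intros Hin; apply Hl; right; exact Hin]. }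
    rewrite Hone; [ring|]. intros Hin. apply in_seq in Hin. lia.
  - rewrite IH by lia. ring.
Qed.

Lemma Rsum_pairs (g : nat -> nat -> R) N :
  Rsum (map (fun ij => g (fst ij) (snd ij)) (pairs N)) =
  rsum (fun i => rsum (fun j => g i j) i (N + 1 - i)) 1 N.
Proof.
  unfold pairs, rsum. induction (seq 1 N) as [|i l IH]; simpl; [reflexivity|].
  rewrite map_app, Rsum_app, IH, map_map. reflexivity.
Qed.

Lemma rsum_triangle_sym (f : nat -> nat -> R) N : (forall i j, f i j = f j i) ->
  rsum (fun i => rsum (fun j => (if i =? j then /2 else 1) * f i j) i (N + 1 - i)) 1 N =
  / 2 * rsum (fun i => rsum (fun j => f i j) 1 N) 1 N.
Proof.
  intros Hsym. induction N as [|N IH]; [unfold rsum; simpl; ring|].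
  rewrite rsum_S, (rsum_ext _ (fun i => rsum (fun j => (if i =? j then /2 else 1) * f i j) i (N + 1 - i)
                                        + f i (S N))).
  2:{ intros i Hi. replace (S N + 1 - i)%nat with (S (N + 1 - i)) by lia.
      rewrite rsum_S. replace (i + (N + 1 - i))%nat with (S N) by lia.
      destruct (Nat.eqb_spec i (S N)); [lia | ring]. }
  rewrite (rsum_S (fun i => rsum (fun j => f i j) 1 (S N))),
    (rsum_ext (fun i => rsum (fun j => f i j) 1 (S N)) (fun i => rsum (fun j => f i j) 1 N + f i (S N))).
  2:{ intros i Hi. rewrite rsum_S. reflexivity. }
  rewrite !rsum_add, IH, rsum_S.
  replace (1 + N)%nat with (S N) by lia. replace (S N + 1 - S N)%nat with 1%nat by lia.
  rewrite (rsum_ext (fun j => f (S N) j) (fun j => f j (S N))) by (intros; apply Hsym).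
  unfold rsum at 4; simpl. rewrite Nat.eqb_refl. field.
Qed.

Lemma Rsum_pairs_sym (g f : nat -> nat -> R) N :
  (forall i j, f i j = f j i) ->
  (forall i j, (1 <= i <= j)%nat -> (j <= N)%nat -> g i j = (if i =? j then /2 else 1) * f i j) ->
  Rsum (map (fun ij => g (fst ij) (snd ij)) (pairs N)) =
  / 2 * rsum (fun i => rsum (fun j => f i j) 1 N) 1 N.
Proof.
  intros Hsym Hg. rewrite Rsum_pairs, <- rsum_triangle_sym by exact Hsym.
  apply rsum_ext. intros i Hi. apply rsum_ext. intros j Hj. apply Hg; lia.
Qed.

Lemma rsum_antidiagonal (g : nat -> nat -> R) N :
  rsum (fun i => rsum (fun j => if (i + j <=? N)%nat then g i j else 0) 1 N) 1 N =
  rsum (fun m => rsum (fun i => g i (m - i)%nat) 1 (m - 1)) 1 N.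
Proof.
  induction N as [|N IH]; [reflexivity|].
  rewrite (rsum_ext _ (fun i => rsum (fun j => if (i + j <=? N)%nat then g i j else 0) 1 (S N)
                     + rsum (fun j => if j =? S N - i then g i j else 0) 1 (S N))).
  2:{ intros i Hi. rewrite <- rsum_add. apply rsum_ext. intros j Hj.
      destruct (Nat.leb_spec (i + j) (S N)), (Nat.leb_spec (i + j) N),
        (Nat.eqb_spec j (S N - i)); try lia; ring. }
  rewrite rsum_add, !(rsum_S _ 1 N). replace (1 + N)%nat with (S N) by lia.
  rewrite (rsum_ext (fun i => rsum (fun j => if (i + j <=? N)%nat then g i j else 0) 1 (S N))
                    (fun i => rsum (fun j => if (i + j <=? N)%nat then g i j else 0) 1 N)).
  2:{ intros i Hi. rewrite rsum_S. destruct (Nat.leb_spec (i + (1 + N)) N); [lia | ring]. }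
  rewrite (rsum_ext (fun i => rsum (fun j => if j =? S N - i then g i j else 0) 1 (S N))
                    (fun i => g i (S N - i)%nat)).
  2:{ intros i Hi. apply rsum_kronecker. lia. }
  rewrite (rsum_eq0 (fun j => if S N + j <=? N then g (S N) j else 0)),
    (rsum_eq0 (fun j => if j =? S N - S N then g (S N) j else 0)).
  2:{ intros j Hj. destruct (Nat.eqb_spec j (S N - S N)); [lia | reflexivity]. }
  2:{ intros j Hj. destruct (Nat.leb_spec (S N + j) N); [lia | reflexivity]. }
  destruct (Nat.leb_spec (S N + S N) N), (Nat.eqb_spec (S N) (S N - S N)); try lia.
  rewrite IH. replace (S N - 1)%nat with N by lia. ring.
Qed.

Lemma INR_fact_pos n : 0 < INR (fact n).
Proof. apply lt_0_INR, lt_O_fact. Qed.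

Lemma derivable_pt_lim_rsum (F : nat -> R -> R) (F' : nat -> R) a n x :
  (forall k, (a <= k < a + n)%nat -> derivable_pt_lim (F k) x (F' k)) ->
  derivable_pt_lim (fun y => rsum (fun k => F k y) a n) x (rsum F' a n).
Proof.
  revert a. induction n as [|n IH]; intros a HF; unfold rsum; simpl.
  - apply derivable_pt_lim_const.
  - apply (derivable_pt_lim_plus (F a) (fun y => rsum (fun k => F k y) (S a) n)).
    + apply HF. lia.
    + apply IH. intros k Hk. apply HF. lia.
Qed.

Lemma derivable_pt_lim_pow_shift (c : R) (m : nat) x :
  derivable_pt_lim (fun y => (y + c) ^ m) x (INR m * (x + c) ^ pred m).
Proof. apply is_derive_Reals. auto_derive; [exact I | ring]. Qed.

Lemma derivable_pt_lim_pow_fact (a : R) (m : nat) y :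
  derivable_pt_lim (fun x => (x - a) ^ S m / INR (fact (S m))) y ((y - a) ^ m / INR (fact m)).
Proof.
  apply is_derive_Reals. auto_derive; [exact I|].
  replace (match m with 0%nat => 1 | S _ => INR m + 1 end) with (INR (S m)) by (destruct m; reflexivity).
  change (fact m + m * fact m)%nat with (fact (S m)). rewrite fact_simpl, mult_INR.
  assert (H := INR_fact_pos m). assert (0 < INR (S m)) by (apply lt_0_INR; lia).
  unfold Rminus. field. lra.
Qed.

Lemma zero_derivative_const (f : R -> R) a :
  (forall y, a < y -> derivable_pt_lim f y 0) -> forall s t, a < s -> s <= t -> f s = f t.
Proof.
  intros Hf s t Hs Hst.
  assert (Hd : forall x, s < x < t -> derivable_pt f x) by (intros x Hx; exists 0; apply Hf; lra).
  symmetry. apply (null_derivative_loc f s t Hd); [| | lra].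
  - intros x Hx. apply derivable_continuous_pt. exists 0. apply Hf. lra.
  - intros x Hx. apply derive_pt_eq_0, Hf. lra.
Qed.

Lemma zero_derivative_const_R (f : R -> R) :
  (forall y, derivable_pt_lim f y 0) -> forall s t, f s = f t.
Proof.
  intros Hf s t. destruct (Rle_dec s t).
  - apply (zero_derivative_const f (s - 1)); auto; lra.
  - symmetry. apply (zero_derivative_const f (t - 1)); auto; lra.
Qed.

(** * Finite differences and Abel's identity *)

Definition fdiff_weight (n k : nat) : R := (-1) ^ k / (INR (fact k) * INR (fact (n - k))).

(* [fdiff n f = (-1)^n (Δ^n f)(0) / n!] *)
Definition fdiff (n : nat) (f : nat -> R) : R := rsum (fun k => fdiff_weight n k * f k) 0 (S n).

Lemma fdiff_weight_S_0 n : INR (S n) * fdiff_weight (S n) 0 = fdiff_weight n 0.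
Proof.
  unfold fdiff_weight. rewrite !Nat.sub_0_r, fact_simpl, mult_INR.
  assert (H := INR_fact_pos n). assert (0 < INR (S n)) by (apply lt_0_INR; lia).
  change (INR (fact 0)) with 1. field. lra.
Qed.

Lemma fdiff_weight_S n k : (k < n)%nat ->
  INR (S n) * fdiff_weight (S n) (S k) = fdiff_weight n (S k) - fdiff_weight n k.
Proof.
  intros Hk. unfold fdiff_weight.
  replace (S n - S k)%nat with (n - k)%nat by lia.
  replace (n - k)%nat with (S (n - S k)) by lia.
  rewrite !fact_simpl, !mult_INR, <- tech_pow_Rmult.
  replace (INR (S (n - S k))) with (INR n - INR k) by (rewrite S_INR, minus_INR by lia; rewrite S_INR; ring).
  assert (INR k < INR n) by (apply lt_INR; lia).
  assert (H1 := INR_fact_pos k). assert (H2 := INR_fact_pos (n - S k)).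
  assert (H0 := pos_INR k). rewrite !S_INR. field. repeat split; lra.
Qed.

Lemma fdiff_weight_S_diag n : INR (S n) * fdiff_weight (S n) (S n) = - fdiff_weight n n.
Proof.
  unfold fdiff_weight. rewrite !Nat.sub_diag, fact_simpl, mult_INR, <- tech_pow_Rmult.
  assert (H := INR_fact_pos n). assert (0 < INR (S n)) by (apply lt_0_INR; lia).
  change (INR (fact 0)) with 1. field. lra.
Qed.

Lemma fdiff_S n f : INR (S n) * fdiff (S n) f = fdiff n (fun k => f k - f (S k)).
Proof.
  set (u k := if (k <? n)%nat then fdiff_weight n (S k) else 0).
  assert (Hw : forall k, (k <= n)%nat -> INR (S n) * fdiff_weight (S n) (S k) = u k - fdiff_weight n k).
  { intros k Hk. unfold u. destruct (Nat.ltb_spec k n).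
    - apply fdiff_weight_S. exact H.
    - replace k with n by lia. rewrite fdiff_weight_S_diag. ring. }
  assert (Hu : fdiff n f = fdiff_weight n 0 * f 0%nat + rsum (fun k => u k * f (S k)) 0 (S n)).
  { unfold fdiff. rewrite (rsum_S (fun k => u k * f (S k))). unfold u at 2.
    rewrite Nat.ltb_irrefl, Rmult_0_l, Rplus_0_r.
    rewrite rsum_cons, rsum_shift. f_equal. apply rsum_ext. intros k Hk. unfold u.
    destruct (Nat.ltb_spec k n); [reflexivity | lia]. }
  unfold fdiff at 1 2. rewrite rsum_cons, rsum_shift, Rmult_plus_distr_l, <- Rmult_assoc, fdiff_weight_S_0, <- rsum_scal.
  rewrite (rsum_ext _ (fun k => u k * f (S k) - fdiff_weight n k * f (S k))).
  2:{ intros k Hk. rewrite <- Rmult_assoc, Hw by lia. ring. }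
  rewrite rsum_sub, (rsum_ext (fun k => fdiff_weight n k * (f k - f (S k)))
    (fun k => fdiff_weight n k * f k - fdiff_weight n k * f (S k))) by (intros; ring).
  rewrite rsum_sub. fold (fdiff n f). rewrite Hu. ring.
Qed.

Lemma fdiff_ext n f g : (forall k, (k <= n)%nat -> f k = g k) -> fdiff n f = fdiff n g.
Proof. intros H. unfold fdiff. apply rsum_ext. intros k Hk. rewrite H by lia. reflexivity. Qed.

Lemma fdiff_sub n f g : fdiff n (fun k => f k - g k) = fdiff n f - fdiff n g.
Proof. unfold fdiff. rewrite <- rsum_sub. apply rsum_ext. intros; ring. Qed.

Lemma fdiff_pow_shift n : forall j x, (j < n)%nat -> fdiff n (fun k => (x + INR k) ^ j) = 0.
Proof.
  induction n as [|n IH]; intros j x Hj; [lia|].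
  assert (HS : 0 < INR (S n)) by (apply lt_0_INR; lia).
  apply Rmult_eq_reg_l with (INR (S n)); [|lra]. rewrite Rmult_0_r, fdiff_S.
  rewrite (fdiff_ext n _ (fun k => (x + INR k) ^ j - ((x + 1) + INR k) ^ j)).
  2:{ intros k _. rewrite S_INR. replace (x + (INR k + 1)) with (x + 1 + INR k) by ring. reflexivity. }
  rewrite fdiff_sub.
  destruct (Nat.ltb_spec j n); [rewrite (IH j x H), (IH j (x + 1) H); ring|].
  replace j with n by lia.
  (* [y |-> fdiff n (y + k)^n] has derivative [n * fdiff n (y + k)^(n-1) = 0] *)
  set (h y := fdiff n (fun k => (y + INR k) ^ n)).
  assert (Hh : forall y, derivable_pt_lim h y 0).
  { intros y.
    replace 0 with (INR n * fdiff n (fun k => (y + INR k) ^ pred n)).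
    - unfold fdiff. rewrite <- rsum_scal.
      apply (derivable_pt_lim_rsum (fun k y => fdiff_weight n k * (y + INR k) ^ n)).
      intros k _.
      replace (INR n * (fdiff_weight n k * (y + INR k) ^ pred n))
        with (fdiff_weight n k * (INR n * (y + INR k) ^ pred n)) by ring.
      apply derivable_pt_lim_scal, derivable_pt_lim_pow_shift.
    - destruct n as [|n]; [simpl; ring|]. rewrite IH by (simpl; lia). ring. }
  change (h x - h (x + 1) = 0). rewrite (zero_derivative_const_R h Hh x (x + 1)). ring.
Qed.

(* coefficients of the tree function [T(x) = x e^T(x)] *)
Definition tree_coef (k : nat) : R := INR k ^ (k - 1) / INR (fact k).

Lemma tree_coef_S k : tree_coef (S k) = (INR k + 1) ^ (k - 1) / INR (fact k).
Proof.
  unfold tree_coef. rewrite S_INR. destruct k as [|k]; [simpl; field|].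
  rewrite fact_simpl, mult_INR. replace (S (S k) - 1)%nat with (S (S k - 1)) by lia.
  rewrite <- tech_pow_Rmult, !S_INR.
  assert (H1 := INR_fact_pos (S k)). assert (H2 := pos_INR k). field. lra.
Qed.

Lemma tree_coef_pos k : (1 <= k)%nat -> 0 < tree_coef k.
Proof.
  intros Hk. apply Rdiv_lt_0_compat; [|apply INR_fact_pos]. apply pow_lt, lt_0_INR. lia.
Qed.

Lemma pow_neg1_sub m k : (k <= m)%nat -> (-1) ^ (m - k) = (-1) ^ m * (-1) ^ k.
Proof.
  intros Hk. replace m with ((m - k) + k)%nat at 2 by lia.
  rewrite pow_add, Rmult_assoc, <- pow_add.
  replace (k + k)%nat with (2 * k)%nat by lia. rewrite pow_mult. simpl. rewrite Rmult_1_r.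
  replace (-1 * -1) with 1 by ring. rewrite pow1. ring.
Qed.

Lemma abel_term_at_neg1 n k : (k <= S n)%nat ->
  tree_coef (S k) * ((-1 - INR k) ^ (S n - k) / INR (fact (S n - k))) =
  (-1) ^ S n * (fdiff_weight (S n) k * (1 + INR k) ^ n).
Proof.
  intros Hk. rewrite tree_coef_S. unfold fdiff_weight.
  replace (-1 - INR k) with ((-1) * (1 + INR k)) by ring.
  rewrite Rpow_mult_distr, pow_neg1_sub by exact Hk.
  replace ((1 + INR k) ^ n) with ((INR k + 1) ^ (k - 1) * (1 + INR k) ^ (S n - k)).
  2:{ destruct k as [|k].
      - simpl INR. rewrite Rplus_0_l, Rplus_0_r, !pow1. ring.
      - rewrite Rplus_comm, <- pow_add. f_equal. lia. }
  assert (H1 := INR_fact_pos k). assert (H2 := INR_fact_pos (S n - k)). field. lra.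
Qed.

Lemma abel_identity n : forall Y,
  rsum (fun k => tree_coef (S k) * ((Y - INR k) ^ (n - k) / INR (fact (n - k)))) 0 (S n) =
  (1 + Y) ^ n / INR (fact n).
Proof.
  induction n as [|n IH]; intros Y; [unfold rsum, tree_coef; simpl; field|].
  set (term m k y := tree_coef (S k) * ((y - INR k) ^ (m - k) / INR (fact (m - k)))).
  set (F y := rsum (fun k => term (S n) k y) 0 (S (S n)) - (1 + y) ^ S n / INR (fact (S n))).
  (* differentiating in [Y] lowers [n] by one *)
  assert (HF : forall y, derivable_pt_lim F y 0).
  { intros y. unfold F.
    replace 0 with (rsum (fun k => if (k <=? n)%nat then term n k y else 0) 0 (S (S n))
                    - (1 + y) ^ n / INR (fact n)).
    - apply derivable_pt_lim_minus.
      + apply (derivable_pt_lim_rsum (term (S n))). intros k Hk. cbv beta. unfold term.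
        destruct (Nat.leb_spec k n).
        * replace (S n - k)%nat with (S (n - k)) by lia.
          apply derivable_pt_lim_scal, derivable_pt_lim_pow_fact.
        * replace (S n - k)%nat with 0%nat by lia.
          apply (derivable_pt_lim_ext (fun _ => tree_coef (S k))); [intros x; simpl; field|].
          apply derivable_pt_lim_const.
      + replace ((1 + y) ^ n) with ((y - (-1)) ^ n) by (f_equal; ring).
        eapply derivable_pt_lim_ext; [| apply derivable_pt_lim_pow_fact].
        intros x. simpl. replace (x - -1) with (1 + x) by ring. reflexivity.
    - rewrite rsum_S. destruct (Nat.leb_spec (0 + S n) n); [lia|].
      rewrite (rsum_ext _ (fun k => term n k y)) by (intros k Hk; destruct (Nat.leb_spec k n); [reflexivity | lia]).
      unfold term. rewrite IH. ring. }
  (* at [Y = -1] the sum is an [(S n)]-th difference of a polynomial of degree [n] *)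
  assert (HF1 : F (-1) = 0).
  { unfold F. replace (1 + -1) with 0 by ring. rewrite pow_i by lia.
    rewrite (rsum_ext _ (fun k => (-1) ^ S n * (fdiff_weight (S n) k * (1 + INR k) ^ n)))
      by (intros k Hk; apply abel_term_at_neg1; lia).
    rewrite rsum_scal. fold (fdiff (S n) (fun k => (1 + INR k) ^ n)).
    rewrite fdiff_pow_shift by lia. unfold Rdiv. ring. }
  assert (HY := zero_derivative_const_R F HF Y (-1)). rewrite HF1 in HY.
  unfold F, term in HY. lra.
Qed.

Lemma abel_convolution n :
  rsum (fun k => (INR (n - k) + 1) * (tree_coef (S k) * tree_coef (S (n - k)))) 0 (S n) =
  (INR n + 2) ^ n / INR (fact n).
Proof.
  replace ((INR n + 2) ^ n) with ((1 + (INR n + 1)) ^ n) by (f_equal; ring).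
  rewrite <- abel_identity. apply rsum_ext. intros k Hk.
  replace (INR n + 1 - INR k) with (INR (n - k) + 1) by (rewrite minus_INR by lia; ring).
  rewrite (tree_coef_S (n - k)).
  destruct (n - k)%nat as [|j]; [cbn [INR pow fact Nat.sub]; field|].
  rewrite fact_simpl, mult_INR, Nat.sub_succ, Nat.sub_0_r, <- tech_pow_Rmult, !S_INR.
  assert (H1 := INR_fact_pos j). assert (H2 := pos_INR j). field. lra.
Qed.

Lemma abel_convolution_weighted n :
  rsum (fun k => INR (n - k) * (tree_coef (S k) * tree_coef (S (n - k)))) 0 (S n) =
  INR n * (INR n + 2) ^ (n - 1) / INR (fact n).
Proof.
  destruct n as [|n]; [unfold rsum; simpl; field|].
  rewrite rsum_S, Nat.sub_diag, Rmult_0_l, Rplus_0_r, Nat.sub_succ, Nat.sub_0_r.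
  rewrite fact_simpl, mult_INR.
  replace ((INR (S n) + 2) ^ n) with ((1 + (INR (S n) + 1)) ^ n) by (f_equal; ring).
  assert (H1 := INR_fact_pos n). assert (0 < INR (S n)) by (apply lt_0_INR; lia).
  replace (INR (S n) * (1 + (INR (S n) + 1)) ^ n / (INR (S n) * INR (fact n)))
    with ((1 + (INR (S n) + 1)) ^ n / INR (fact n)) by (field; lra).
  rewrite <- abel_identity. apply rsum_ext. intros k Hk.
  replace (S n - k)%nat with (S (n - k)) by lia.
  rewrite (tree_coef_S (S (n - k))), Nat.sub_succ, Nat.sub_0_r, fact_simpl, mult_INR.
  replace (INR (S n) + 1 - INR k) with (INR (S (n - k)) + 1) by (rewrite !S_INR, minus_INR by lia; ring).
  assert (H2 := INR_fact_pos (n - k)). assert (0 < INR (S (n - k))) by (apply lt_0_INR; lia).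
  field. lra.
Qed.

(* the Cayley/Abel identity [sum_{i=1}^{m-1} C(m,i) i^(i-1) (m-i)^(m-i-1) = 2 (m-1) m^(m-2)] *)
Lemma tree_coef_convolution m : (1 <= m)%nat ->
  INR m * rsum (fun i => tree_coef i * tree_coef (m - i)) 1 (m - 1) = 2 * (INR m - 1) * tree_coef m.
Proof.
  intros Hm. destruct m as [|[|n]]; [lia | unfold rsum; simpl; ring|].
  replace (S (S n) - 1)%nat with (S n) by lia. rewrite rsum_shift.
  rewrite (rsum_ext _ (fun k => tree_coef (S k) * tree_coef (S (n - k)))).
  2:{ intros k Hk. do 2 f_equal. lia. }
  assert (Hdiff : rsum (fun k => tree_coef (S k) * tree_coef (S (n - k))) 0 (S n) =
                  (INR n + 2) ^ n / INR (fact n) - INR n * (INR n + 2) ^ (n - 1) / INR (fact n)).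
  { rewrite <- abel_convolution, <- abel_convolution_weighted, <- rsum_sub.
    apply rsum_ext. intros k Hk. ring. }
  rewrite Hdiff, tree_coef_S, Nat.sub_succ, Nat.sub_0_r, fact_simpl, mult_INR.
  replace (INR (S n) + 1) with (INR n + 2) by (rewrite S_INR; ring).
  replace (INR (S (S n))) with (INR n + 2) by (rewrite !S_INR; ring).
  assert (Hpow : INR n * (INR n + 2) ^ (n - 1) * (INR n + 2) = INR n * (INR n + 2) ^ n).
  { destruct n as [|n]; [simpl; ring|]. rewrite Nat.sub_succ, Nat.sub_0_r. simpl. ring. }
  assert (H1 := INR_fact_pos n). assert (H2 := pos_INR n).
  replace ((INR n + 2) * ((INR n + 2) ^ n / INR (fact n) - INR n * (INR n + 2) ^ (n - 1) / INR (fact n)))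
    with (((INR n + 2) * (INR n + 2) ^ n - INR n * (INR n + 2) ^ n) / INR (fact n))
    by (rewrite <- Hpow; field; lra).
  rewrite S_INR. field. lra.
Qed.

Lemma INR_natsum {A} (f : A -> nat) (l : list A) :
  INR (natsum (map f l)) = Rsum (map (fun x => INR (f x)) l).
Proof. induction l as [|x l IH]; simpl; [reflexivity | rewrite plus_INR, IH; reflexivity]. Qed.

Lemma in_Omega_mass N eta : in_Omega N eta -> rsum (fun k => INR k * INR (eta k)) 1 N = INR N.
Proof.
  intros [_ [_ Hmass]]. rewrite <- Hmass at 2. rewrite INR_natsum. unfold rsum. f_equal.
  apply map_ext. intros k. symmetry. apply mult_INR.
Qed.

Lemma in_Omega_r_count N r eta : in_Omega_r N r eta -> rsum (fun k => INR (eta k)) 1 N = INR r.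
Proof. intros [_ Hr]. rewrite <- Hr, INR_natsum. reflexivity. Qed.

Lemma in_Omega_r_le N r eta : in_Omega_r N r eta -> (r <= N)%nat.
Proof.
  intros Heta. apply INR_le.
  rewrite <- (in_Omega_r_count N r eta Heta), <- (in_Omega_mass N eta (proj1 Heta)).
  apply rsum_le. intros k Hk. assert (1 <= INR k) by (apply (le_INR 1); lia).
  assert (0 <= INR (eta k)) by apply pos_INR. nra.
Qed.

Lemma in_Omega_r_full N eta : in_Omega_r N N eta -> eta = init N.
Proof.
  intros Heta. pose proof Heta as [[H0 [Hbig _]] _].
  (* [sum (k - 1) n_k = N - N = 0] with nonnegative terms forces [n_k = 0] for [k >= 2] *)
  assert (Hz : rsum (fun k => (INR k - 1) * INR (eta k)) 1 N = 0).
  { rewrite (rsum_ext _ (fun k => INR k * INR (eta k) - INR (eta k))) by (intros; ring).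
    rewrite rsum_sub, (in_Omega_mass N eta (proj1 Heta)), (in_Omega_r_count N N eta Heta). ring. }
  assert (Hge2 : forall k, (2 <= k <= N)%nat -> eta k = 0%nat).
  { intros k Hk. apply INR_eq. change (INR 0) with 0.
    assert (Hnn : forall k, (1 <= k < 1 + N)%nat -> 0 <= (INR k - 1) * INR (eta k)).
    { intros x Hx. apply Rmult_le_pos; [|apply pos_INR].
      assert (1 <= INR x) by (apply (le_INR 1); lia). lra. }
    assert (E := rsum_nonneg_eq0 _ _ _ Hnn Hz k ltac:(lia)).
    assert (2 <= INR k) by (apply (le_INR 2); lia). nra. }
  apply functional_extensionality. intros k. unfold init.
  destruct (Nat.eqb_spec k 1) as [->|Hk1].
  - assert (HC := in_Omega_r_count N N eta Heta).
    destruct N as [|N]; [apply Hbig; lia|].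
    rewrite rsum_cons, rsum_eq0 in HC by (intros k Hk; rewrite Hge2 by lia; reflexivity).
    apply INR_eq. lra.
  - destruct k as [|k]; [exact H0|].
    destruct (Nat.le_gt_cases (S k) N); [apply Hge2; lia | apply Hbig; lia].
Qed.

Lemma INR_split i j eta k : (1 <= eta (i + j))%nat ->
  INR (split i j eta k) = INR (eta k) - (if k =? i + j then 1 else 0)
                          + (if k =? i then 1 else 0) + (if k =? j then 1 else 0).
Proof.
  intros Hm. unfold split.
  destruct (k =? i), (k =? j), (Nat.eqb_spec k (i + j)) as [->|]; simpl ind;
    rewrite ?plus_INR, ?minus_INR by lia; simpl; ring.
Qed.

Lemma in_Omega_support N eta m : in_Omega N eta -> (1 <= eta m)%nat -> (m <= N)%nat.
Proof.
  intros [_ [Hbig _]] Hm. destruct (Nat.le_gt_cases m N); [assumption|].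
  rewrite Hbig in Hm by assumption. lia.
Qed.

Lemma split_in_Omega_r N r eta i j : in_Omega_r N r eta -> (1 <= i <= j)%nat ->
  (1 <= eta (i + j))%nat -> in_Omega_r N (S r) (split i j eta).
Proof.
  intros Heta Hij Hm. pose proof Heta as [[H0 [Hbig _]] _].
  assert (HmN := in_Omega_support N eta (i + j) (proj1 Heta) Hm).
  assert (Hkron : forall g : nat -> R,
    rsum (fun k => g k * INR (split i j eta k)) 1 N =
    rsum (fun k => g k * INR (eta k)) 1 N - g (i + j)%nat + g i + g j).
  { intros g.
    rewrite (rsum_ext _ (fun k => g k * INR (eta k) - (if k =? i + j then g k else 0)
                                  + (if k =? i then g k else 0) + (if k =? j then g k else 0))).
    - rewrite !rsum_add, rsum_sub, !rsum_kronecker by lia. reflexivity.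
    - intros k _. rewrite INR_split by exact Hm.
      destruct (k =? i + j), (k =? i), (k =? j); ring. }
  split; [split; [|split]|].
  - unfold split. rewrite H0.
    destruct (Nat.eqb_spec 0 (i + j)), (Nat.eqb_spec 0 i), (Nat.eqb_spec 0 j); lia || reflexivity.
  - intros k Hk. unfold split. rewrite Hbig by lia.
    destruct (Nat.eqb_spec k (i + j)), (Nat.eqb_spec k i), (Nat.eqb_spec k j); lia || reflexivity.
  - apply INR_eq. rewrite INR_natsum. fold (rsum (fun k => INR (k * split i j eta k)) 1 N).
    rewrite (rsum_ext _ (fun k => INR k * INR (split i j eta k))) by (intros; apply mult_INR).
    rewrite Hkron, (in_Omega_mass N eta (proj1 Heta)), plus_INR. ring.
  - apply INR_eq. rewrite INR_natsum. fold (rsum (fun k => INR (split i j eta k)) 1 N).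
    rewrite (rsum_ext _ (fun k => 1 * INR (split i j eta k))) by (intros; ring).
    rewrite Hkron, (rsum_ext _ (fun k => INR (eta k))) by (intros; ring).
    rewrite (in_Omega_r_count N r eta Heta), S_INR. ring.
Qed.

(** * The Gibbs product and the transition rates *)

Definition gibbs_weight (k n : nat) : R := tree_coef k ^ n / INR (fact n).

Definition gibbs_prod (N : nat) (eta : state) : R :=
  Rprod (map (fun k => gibbs_weight k (eta k)) (seq 1 N)).

Definition gibbs_time (v : R) (N r : nat) (t : R) : R :=
  INR (fact N) * exp (- INR N * INR (r - 1) * v * t) *
  (1 - exp (- INR N * v * t)) ^ (N - r) / INR N ^ (N - r).

Lemma gibbs_formula_factor v N r eta t :
  gibbs_formula v N r eta t = gibbs_time v N r t * gibbs_prod N eta.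
Proof.
  unfold gibbs_formula, gibbs_time, gibbs_prod. f_equal. f_equal. apply map_ext. intros k.
  unfold gibbs_weight, tree_coef, Rdiv.
  rewrite Rpow_mult_distr, pow_inv, <- pow_mult, Nat.mul_comm, Rinv_mult. ring.
Qed.

Lemma gibbs_weight_S k n : gibbs_weight k (S n) = gibbs_weight k n * tree_coef k / INR (S n).
Proof.
  unfold gibbs_weight. rewrite fact_simpl, mult_INR. simpl pow.
  assert (H := INR_fact_pos n). assert (0 < INR (S n)) by (apply lt_0_INR; lia). field. lra.
Qed.

Lemma gibbs_prod_init N : (1 <= N)%nat -> gibbs_prod N (init N) = / INR (fact N).
Proof.
  intros HN. unfold gibbs_prod.
  rewrite (map_ext _ (fun k => if k =? 1 then / INR (fact N) else 1)).
  - apply Rprod_seq_kronecker. lia.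
  - intros k. unfold init, gibbs_weight.
    destruct (Nat.eqb_spec k 1) as [->|]; [|simpl; field].
    unfold tree_coef. simpl. replace (1 / 1) with 1 by field. rewrite pow1. field. apply INR_fact_neq_0.
Qed.

Lemma gibbs_prod_split N eta i j : (1 <= i <= j)%nat -> (i + j <= N)%nat -> (1 <= eta (i + j))%nat ->
  gibbs_prod N (split i j eta) * (INR (S (eta i)) * INR (split i j eta j) * tree_coef (i + j)%nat) =
  gibbs_prod N eta * (tree_coef i * tree_coef j * INR (eta (i + j)%nat)).
Proof.
  intros Hij HmN Hm.
  set (at_ (a : nat) (c : R) (k : nat) := if k =? a then c else 1).
  assert (Hprod : forall f x y z, Rprod (map (fun k => f k * (at_ i x k * at_ j y k * at_ (i + j)%nat z k)) (seq 1 N))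
                                  = Rprod (map f (seq 1 N)) * (x * y * z)).
  { intros f x y z. rewrite !Rprod_mul. unfold at_. rewrite !Rprod_seq_kronecker by lia. reflexivity. }
  assert (Hsj : split i j eta j = if i =? j then S (S (eta j)) else S (eta j)).
  { unfold split. rewrite Nat.eqb_refl, (Nat.eqb_sym j i).
    destruct (Nat.eqb_spec j (i + j)); [lia|]. destruct (i =? j); simpl ind; lia. }
  unfold gibbs_prod. rewrite Hsj, <- !Hprod. f_equal. apply map_ext. intros k. unfold at_, split.
  destruct (Nat.eqb_spec k (i + j)) as [->|Hkm].
  - destruct (Nat.eqb_spec (i + j) i), (Nat.eqb_spec (i + j) j); [lia..|]. simpl ind.
    destruct (eta (i + j)%nat) as [|e]; [lia|]. replace (S e - 1 + 0 + 0)%nat with e by lia.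
    rewrite gibbs_weight_S. field. apply not_0_INR. lia.
  - destruct (Nat.eqb_spec k i) as [->|Hki].
    + destruct (Nat.eqb_spec i j) as [<-|Hne]; simpl ind.
      * replace (eta i - 0 + 1 + 1)%nat with (S (S (eta i))) by lia.
        rewrite !gibbs_weight_S. field. split; apply not_0_INR; lia.
      * replace (eta i - 0 + 1 + 0)%nat with (S (eta i)) by lia.
        rewrite gibbs_weight_S. field. apply not_0_INR. lia.
    + destruct (Nat.eqb_spec k j) as [->|Hkj]; simpl ind.
      * destruct (Nat.eqb_spec i j); [lia|].
        replace (eta j - 0 + 0 + 1)%nat with (S (eta j)) by lia.
        rewrite gibbs_weight_S. field. apply not_0_INR. lia.
      * replace (eta k - 0 + 0 + 0)%nat with (eta k) by lia. ring.
Qed.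

Lemma rate_split v eta i j : (1 <= i <= j)%nat ->
  rate v (split i j eta) i j =
  (if i =? j then / 2 else 1) * (psi v i j * (INR (S (eta i)) * INR (split i j eta j))).
Proof.
  intros Hij. unfold rate, split.
  destruct (Nat.eqb_spec i (i + j)), (Nat.eqb_spec j (i + j)); [lia..|].
  rewrite (Nat.eqb_sym j i).
  destruct (Nat.eqb_spec i j) as [<-|Hne]; rewrite Nat.eqb_refl; simpl ind.
  - replace (eta i - 0 + 1 + 1 - 1)%nat with (S (eta i)) by lia.
    replace (eta i - 0 + 1 + 1)%nat with (S (S (eta i))) by lia. field.
  - replace (eta i - 0 + 1 + 0)%nat with (S (eta i)) by lia.
    replace (eta j - 0 + 0 + 1)%nat with (S (eta j)) by lia. ring.
Qed.

Lemma outflow_eq v N r eta : in_Omega_r N r eta -> outflow v N eta = v * INR N * (INR r - 1).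
Proof.
  intros Heta. unfold outflow.
  rewrite (Rsum_pairs_sym (rate v eta)
             (fun i j => INR (i + j) * v * (INR (eta i) * INR (eta j) - if i =? j then INR (eta i) else 0))).
  - rewrite (rsum_ext _ (fun i => rsum (fun j => v * (INR i * INR (eta i)) * INR (eta j)
                                       + v * INR (eta i) * (INR j * INR (eta j))) 1 N
                                 - rsum (fun j => if j =? i then 2 * v * (INR i * INR (eta i)) else 0) 1 N)).
    2:{ intros i Hi. rewrite <- rsum_sub. apply rsum_ext. intros j Hj.
        rewrite plus_INR, (Nat.eqb_sym j i). destruct (Nat.eqb_spec i j) as [<-|]; ring. }
    rewrite rsum_sub, (rsum_ext (fun i => rsum (fun j => if j =? i then 2 * v * (INR i * INR (eta i)) else 0) 1 N)
                                (fun i => 2 * v * (INR i * INR (eta i))))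
      by (intros i Hi; apply (rsum_kronecker (fun _ => 2 * v * (INR i * INR (eta i)))); lia).
    rewrite (rsum_ext _ (fun i => v * (INR i * INR (eta i)) * rsum (fun j => INR (eta j)) 1 N
                                 + v * INR (eta i) * rsum (fun j => INR j * INR (eta j)) 1 N)).
    2:{ intros i Hi. rewrite rsum_add, !rsum_scal. ring. }
    rewrite rsum_add, (in_Omega_r_count N r eta Heta), (in_Omega_mass N eta (proj1 Heta)).
    rewrite (rsum_ext (fun k => v * (INR k * INR (eta k)) * INR r) (fun k => v * INR r * (INR k * INR (eta k))))
      by (intros; ring).
    rewrite (rsum_ext (fun k => v * INR (eta k) * INR N) (fun k => v * INR N * INR (eta k))) by (intros; ring).
    rewrite !rsum_scal, (in_Omega_r_count N r eta Heta), (in_Omega_mass N eta (proj1 Heta)). field.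
  - intros i j. rewrite Nat.add_comm, Nat.eqb_sym. destruct (Nat.eqb_spec j i) as [->|]; ring.
  - intros i j Hij _. unfold rate, psi. destruct (Nat.eqb_spec i j) as [<-|].
    + destruct (eta i) as [|e]; [simpl; field|]. rewrite Nat.sub_succ, Nat.sub_0_r, S_INR. field.
    + ring.
Qed.

Lemma inflow_gibbs v N r eta (q : state -> R) G : in_Omega_r N r eta ->
  (forall i j, (1 <= i <= j)%nat -> (1 <= eta (i + j))%nat ->
     q (split i j eta) = G * gibbs_prod N (split i j eta)) ->
  inflow v N q eta = G * gibbs_prod N eta * v * (INR N - INR r).
Proof.
  intros Heta Hq. pose proof Heta as [[_ [Hbig _]] _].
  set (W i j := INR (i + j) * tree_coef i * tree_coef j / tree_coef (i + j) * INR (eta (i + j)%nat)).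
  unfold inflow.
  rewrite (Rsum_pairs_sym
    (fun i j => if (1 <=? eta (i + j))%nat then q (split i j eta) * rate v (split i j eta) i j else 0)
    (fun i j => G * gibbs_prod N eta * v * W i j)).
  - rewrite (rsum_ext _ (fun i => G * gibbs_prod N eta * v *
                          rsum (fun j => if (i + j <=? N)%nat then W i j else 0) 1 N)).
    2:{ intros i Hi. rewrite <- rsum_scal. apply rsum_ext. intros j Hj.
        destruct (Nat.leb_spec (i + j) N); [reflexivity|].
        unfold W. rewrite Hbig by lia. simpl. ring. }
    rewrite rsum_scal, rsum_antidiagonal.
    (* each size [m] contributes [n_m * 2 (m - 1)] by the tree-coefficient convolution *)
    rewrite (rsum_ext _ (fun m => 2 * (INR m * INR (eta m)) - 2 * INR (eta m))).
    2:{ intros m Hm. assert (Hc := tree_coef_pos m ltac:(lia)).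
        transitivity (INR (eta m) / tree_coef m *
                      (INR m * rsum (fun i => tree_coef i * tree_coef (m - i)) 1 (m - 1))).
        - rewrite <- Rmult_assoc, <- rsum_scal. apply rsum_ext. intros i Hi.
          unfold W. replace (i + (m - i))%nat with m by lia. field. lra.
        - rewrite tree_coef_convolution by lia. field. lra. }
    rewrite rsum_sub, !rsum_scal, (in_Omega_mass N eta (proj1 Heta)), (in_Omega_r_count N r eta Heta).
    field.
  - intros i j. unfold W. rewrite Nat.add_comm. unfold Rdiv. ring.
  - intros i j Hij HjN.
    destruct (Nat.leb_spec 1 (eta (i + j)%nat)) as [Hm|Hm].
    + assert (HmN := in_Omega_support N eta (i + j) (proj1 Heta) Hm).
      assert (Hc := tree_coef_pos (i + j) ltac:(lia)).
      assert (Hsplit := gibbs_prod_split N eta i j Hij HmN Hm).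
      rewrite Hq, rate_split by assumption. unfold W, psi.
      apply Rmult_eq_reg_r with (tree_coef (i + j)); [|lra].
      transitivity ((if i =? j then / 2 else 1) * G * v * INR (i + j) *
                    (gibbs_prod N (split i j eta) *
                     (INR (S (eta i)) * INR (split i j eta j) * tree_coef (i + j)%nat))); [ring|].
      rewrite Hsplit. field. lra.
    + unfold W. replace (eta (i + j)%nat) with 0%nat by lia. simpl. ring.
Qed.

Lemma derivable_pt_lim_exp_pow (a b : R) (d : nat) t :
  derivable_pt_lim (fun s => exp (a * s) * (1 - exp (b * s)) ^ d) t
    (a * exp (a * t) * (1 - exp (b * t)) ^ d - INR d * b * exp ((a + b) * t) * (1 - exp (b * t)) ^ pred d).
Proof.
  apply is_derive_Reals. auto_derive; [exact I|]. rewrite Rmult_plus_distr_r, exp_plus.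
  unfold Rminus. ring.
Qed.

Lemma gibbs_time_derive v N r t : (1 <= r <= N)%nat ->
  derivable_pt_lim (gibbs_time v N r) t
    (- v * INR N * (INR r - 1) * gibbs_time v N r t + v * (INR N - INR r) * gibbs_time v N (S r) t).
Proof.
  intros Hr. assert (HN : 0 < INR N) by (apply lt_0_INR; lia).
  set (a := - INR N * INR (r - 1) * v). set (b := - INR N * v).
  set (C := INR (fact N) / INR N ^ (N - r)).
  replace (- v * INR N * (INR r - 1) * gibbs_time v N r t + v * (INR N - INR r) * gibbs_time v N (S r) t)
    with (C * (a * exp (a * t) * (1 - exp (b * t)) ^ (N - r)
               - INR (N - r) * b * exp ((a + b) * t) * (1 - exp (b * t)) ^ pred (N - r))).
  - apply (derivable_pt_lim_ext (fun s => C * (exp (a * s) * (1 - exp (b * s)) ^ (N - r)))).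
    + intros s. unfold gibbs_time, C, a, b, Rdiv. ring.
    + apply derivable_pt_lim_scal, derivable_pt_lim_exp_pow.
  - unfold gibbs_time, C, a, b. rewrite (minus_INR r 1) by lia.
    destruct (Nat.eq_dec r N) as [->|Hne].
    + replace (N - S N)%nat with 0%nat by lia. rewrite Nat.sub_diag. simpl. field.
    + replace (N - r)%nat with (S (N - S r)) by lia. simpl pred.
      replace (INR (S (N - S r))) with (INR N - INR r) by (rewrite <- (minus_INR N r) by lia; f_equal; lia).
      rewrite (minus_INR (S r) 1), <- tech_pow_Rmult by lia.
      replace ((- INR N * (INR r - INR 1) * v + - INR N * v) * t)
        with (- INR N * (INR (S r) - INR 1) * v * t) by (rewrite S_INR; ring).
      assert (INR N ^ (N - S r) <> 0) by (apply pow_nonzero; lra).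
      rewrite <- tech_pow_Rmult. change (INR 1) with 1. field. lra.
Qed.

Lemma gibbs_formula_forward v N r eta t : (1 <= r <= N)%nat -> in_Omega_r N r eta ->
  derivable_pt_lim (fun s => gibbs_formula v N r eta s) t
    (inflow v N (fun eta' => gibbs_formula v N (S r) eta' t) eta
     - gibbs_formula v N r eta t * outflow v N eta).
Proof.
  intros Hr Heta.
  rewrite (inflow_gibbs v N r eta _ (gibbs_time v N (S r) t) Heta)
    by (intros; apply gibbs_formula_factor).
  rewrite (outflow_eq v N r eta Heta), gibbs_formula_factor.
  apply (derivable_pt_lim_ext (fun s => gibbs_prod N eta * gibbs_time v N r s)).
  { intros s. rewrite gibbs_formula_factor. ring. }
  replace (gibbs_time v N (S r) t * gibbs_prod N eta * v * (INR N - INR r)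
           - gibbs_time v N r t * gibbs_prod N eta * (v * INR N * (INR r - 1)))
    with (gibbs_prod N eta * (- v * INR N * (INR r - 1) * gibbs_time v N r t
                              + v * (INR N - INR r) * gibbs_time v N (S r) t)) by ring.
  apply derivable_pt_lim_scal, gibbs_time_derive, Hr.
Qed.

(** * Uniqueness for the forward equations *)

Lemma In_pairs N i j : In (i, j) (pairs N) -> (1 <= i <= j)%nat.
Proof.
  unfold pairs. intros H. apply in_flat_map in H as [x [Hx Hy]].
  apply in_map_iff in Hy as [y [Hy Hy']]. inversion Hy; subst.
  apply in_seq in Hx. apply in_seq in Hy'. lia.
Qed.

Lemma inflow_ext v N (q1 q2 : state -> R) eta :
  (forall i j, (1 <= i <= j)%nat -> (1 <= eta (i + j))%nat -> q1 (split i j eta) = q2 (split i j eta)) ->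
  inflow v N q1 eta = inflow v N q2 eta.
Proof.
  intros Hq. unfold inflow. f_equal. apply map_ext_in. intros [i j] Hin. cbn [fst snd].
  apply In_pairs in Hin. destruct (Nat.leb_spec 1 (eta (i + j)%nat)); [rewrite Hq by assumption|]; reflexivity.
Qed.

Definition right_continuous_at0 (f : R -> R) : Prop :=
  forall eps, 0 < eps -> exists delta, 0 < delta /\ forall s, 0 < s < delta -> Rabs (f s - f 0) < eps.

Lemma right_continuous_at0_sub (f g : R -> R) :
  right_continuous_at0 f -> continuity_pt g 0 -> right_continuous_at0 (fun s => f s - g s).
Proof.
  intros Hf Hg eps Heps.
  destruct (Hf (eps / 2) ltac:(lra)) as [d1 [Hd1 Hf1]].
  destruct (Hg (eps / 2) ltac:(lra)) as [d2 [Hd2 Hg2]].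
  exists (Rmin d1 d2). split; [apply Rmin_glb_lt; assumption|]. intros s Hs.
  assert (Hs1 : s < d1) by (eapply Rlt_le_trans; [apply Hs | apply Rmin_l]).
  assert (Hs2 : s < d2) by (eapply Rlt_le_trans; [apply Hs | apply Rmin_r]).
  assert (A1 := Hf1 s (conj (proj1 Hs) Hs1)).
  assert (A2 : Rabs (g s - g 0) < eps / 2).
  { apply (Hg2 s). split; [split; [exact I | lra]|].
    change (Rabs (s - 0) < d2). rewrite Rminus_0_r, Rabs_right; lra. }
  replace (f s - g s - (f 0 - g 0)) with ((f s - f 0) - (g s - g 0)) by ring.
  eapply Rle_lt_trans; [apply Rabs_triang|]. rewrite Rabs_Ropp. lra.
Qed.

(* [g e^{cs}] has zero derivative, and is small near [0] *)
Lemma linear_ode_zero (g : R -> R) (c : R) :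
  (forall t, 0 < t -> derivable_pt_lim g t (- c * g t)) -> right_continuous_at0 g -> g 0 = 0 ->
  forall t, 0 <= t -> g t = 0.
Proof.
  intros Hg Hcont H0 t Ht. destruct (Req_dec t 0) as [->|Htn]; [exact H0|].
  set (h s := g s * exp (c * s)).
  assert (Hh : forall s, 0 < s -> derivable_pt_lim h s 0).
  { intros s Hs. replace 0 with (- c * g s * exp (c * s) + g s * (c * exp (c * s))) by ring.
    apply (derivable_pt_lim_mult g (fun s => exp (c * s))); [apply Hg, Hs|].
    apply is_derive_Reals. auto_derive; [exact I | ring]. }
  set (B := exp (Rabs c * t)). assert (HB : 0 < B) by apply exp_pos.
  assert (Hsmall : forall eps, 0 < eps -> Rabs (h t) <= eps * B).
  { intros eps Heps. destruct (Hcont eps Heps) as [d [Hd Hgd]].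
    set (s := Rmin t (d / 2)).
    assert (Hs : 0 < s) by (apply Rmin_glb_lt; lra).
    assert (Hst : s <= t) by apply Rmin_l.
    assert (Hsd : s < d) by (eapply Rle_lt_trans; [apply Rmin_r | lra]).
    rewrite <- (zero_derivative_const h 0 Hh s t Hs Hst).
    unfold h. rewrite Rabs_mult, (Rabs_right (exp _)) by (apply Rle_ge, Rlt_le, exp_pos).
    apply Rmult_le_compat; [apply Rabs_pos | apply Rlt_le, exp_pos | |].
    - left. rewrite <- (Rminus_0_r (g s)), <- H0. apply Hgd. lra.
    - unfold B. destruct (Rle_lt_or_eq_dec (c * s) (Rabs c * t)) as [Hlt|Heq].
      + apply Rle_trans with (Rabs c * s).
        * apply Rmult_le_compat_r; [lra | apply Rle_abs].
        * apply Rmult_le_compat_l; [apply Rabs_pos | exact Hst].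
      + left. apply exp_increasing, Hlt.
      + rewrite Heq. right. reflexivity. }
  assert (Hht : h t = 0).
  { destruct (Req_dec (h t) 0) as [|Hne]; [assumption|].
    assert (Hpos := Rabs_pos_lt _ Hne).
    assert (Hle := Hsmall (Rabs (h t) / (2 * B)) ltac:(apply Rdiv_lt_0_compat; lra)).
    replace (Rabs (h t) / (2 * B) * B) with (Rabs (h t) / 2) in Hle by (field; lra). lra. }
  unfold h in Hht. apply Rmult_integral in Hht as [Hgt|Hexp]; [exact Hgt|].
  exfalso. assert (Hp := exp_pos (c * t)). lra.
Qed.

Lemma in_Omega_r_first N r eta : (1 <= N)%nat -> in_Omega_r N r eta -> (eta 1%nat <= r)%nat.
Proof. intros HN [_ Hr]. rewrite <- Hr. destruct N as [|N]; [lia|]. simpl. lia. Qed.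

Lemma CP_law_at0 v N p r eta : is_CP_law v N p -> (1 <= r <= N)%nat -> in_Omega_r N r eta ->
  p 0 eta = gibbs_formula v N r eta 0.
Proof.
  intros [_ [_ [Hinit Hother]]] Hr Heta.
  destruct (Nat.eq_dec r N) as [->|Hne].
  - rewrite (in_Omega_r_full N eta Heta), Hinit, gibbs_formula_factor, gibbs_prod_init by lia.
    unfold gibbs_time. rewrite Nat.sub_diag, !Rmult_0_r, exp_0. simpl. field. apply INR_fact_neq_0.
  - rewrite Hother; [| exact (proj1 Heta) |].
    + unfold gibbs_formula. rewrite !Rmult_0_r, exp_0, Rminus_diag, pow_i by lia. unfold Rdiv. ring.
    + exists 1%nat. unfold init. simpl. assert (H := in_Omega_r_first N r eta ltac:(lia) Heta). lia.
Qed.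

Lemma CP_law_level v N p r : is_CP_law v N p -> (1 <= r <= N)%nat ->
  (forall eta', in_Omega_r N (S r) eta' -> forall s, 0 <= s -> p s eta' = gibbs_formula v N (S r) eta' s) ->
  forall eta, in_Omega_r N r eta -> forall t, 0 <= t -> p t eta = gibbs_formula v N r eta t.
Proof.
  intros Hlaw Hr Hnext eta Heta t Ht. apply Rminus_diag_uniq. revert t Ht.
  apply (linear_ode_zero (fun s => p s eta - gibbs_formula v N r eta s) (outflow v N eta)).
  - intros s Hs.
    assert (Hin : inflow v N (p s) eta = inflow v N (fun eta' => gibbs_formula v N (S r) eta' s) eta).
    { apply inflow_ext. intros i j Hij Hm. apply Hnext; [apply (split_in_Omega_r N r) | lra]; assumption. }
    replace (- outflow v N eta * (p s eta - gibbs_formula v N r eta s))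
      with ((inflow v N (p s) eta - p s eta * outflow v N eta)
            - (inflow v N (fun eta' => gibbs_formula v N (S r) eta' s) eta
               - gibbs_formula v N r eta s * outflow v N eta)) by (rewrite Hin; ring).
    apply derivable_pt_lim_minus.
    + apply (proj1 Hlaw eta (proj1 Heta) s Hs).
    + apply gibbs_formula_forward; assumption.
  - apply right_continuous_at0_sub.
    + exact (proj1 (proj2 Hlaw) eta (proj1 Heta)).
    + apply derivable_continuous_pt. eexists. apply (gibbs_formula_forward v N r eta 0 Hr Heta).
  - rewrite (CP_law_at0 v N p r eta Hlaw Hr Heta). ring.
Qed.

Theorem mainTheorem4 (v : R) (N : nat) (p : R -> state -> R) :
  0 < v -> (1 <= N)%nat -> is_CP_law v N p ->
  forall (t : R) (r : nat) (eta : state),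
    0 <= t -> (1 <= r <= N)%nat -> in_Omega_r N r eta ->
    p t eta = gibbs_formula v N r eta t.
Proof.
  intros _ _ Hlaw t r eta Ht Hr Heta.
  remember (N - r)%nat as d eqn:Hd. revert r eta t Ht Hr Heta Hd.
  induction d as [|d IH]; intros r eta t Ht Hr Heta Hd;
    apply (CP_law_level v N p r Hlaw Hr); trivial; intros eta' Heta' s Hs.
  - apply in_Omega_r_le in Heta'. lia.
  - apply IH; trivial; lia.
Qed.
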